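(* Let $G$ be a signed digraph with vertex set $V$ such that all cycles of $G$ have the same sign, and let $f$ be a Boolean network on $G$ with a unique fixed point. Then there is a permutation $\pi$ of $V$ (viewed as a word of length $|V|$) such that every word containing $\pi$ synchronizes $f$. In particular, $\pi$ synchronizes $f$.
   Context: A signed digraph on $V$ is $(V,E)$ with $E\subseteq V\times V\times\{-1,1\}$; cycles have no repeated vertices (a loop is a cycle) and their sign is the product of arc signs. A Boolean network (BN) is $f:\{0,1\}^V\to\{0,1\}^V$; its signed interaction digraph has a positive (negative) arc from $j$ to $i$ iff for some $x$ with $x_j=0$, $f_i(x+e_j)-f_i(x)$ is positive (negative). A BN on $G$ is one whose signed interaction digraph is $G$. A word $u$ contains a word $v$ if $v$ can be obtained by deleting some letters of $u$. $f^i(x)$ is $x$ with $x_i$ replaced by $f_i(x)$; $f^{i_1\cdots i_\ell}=f^{i_\ell}\circ\cdots\circ f^{i_1}$; $w$ synchronizes $f$ if $f^w$ is constant. *)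

From mathcomp Require Import all_boot.
Set Implicit Arguments. Unset Strict Implicit. Unset Printing Implicit Defensive.

(* Signs are booleans: true = positive (+1), false = negative (-1). *)
(* A signed digraph on V: a set of arcs (j, i, s), an arc from j to i of sign s. *)
Definition sdigraph (V : finType) := {set (V * V) * bool}.

Definition config (V : finType) := {ffun V -> bool}.
Definition BN (V : finType) := config V -> config V.

Definition upd (V : finType) (x : config V) (j : V) (b : bool) : config V :=
  [ffun k => if k == j then b else x k].

(* Signed interaction digraph of f: arc (j,i,+) iff exists x, x_j = 0,
   f_i(x + e_j) - f_i(x) > 0, i.e. f_i(x) = 0 and f_i(x+e_j) = 1;
   arc (j,i,-) iff f_i(x) = 1 and f_i(x+e_j) = 0. *)
Definition interaction_graph (V : finType) (f : BN V) : sdigraph V :=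
  [set a : (V * V) * bool |
    [exists x : config V,
      [&& x a.1.1 == false,
          f x a.1.2 == ~~ a.2 &
          f (upd x a.1.1 true) a.1.2 == a.2]]].

(* A cycle is given by the list c = [:: (u_0,s_0); ...; (u_{k-1},s_{k-1})],
   k >= 1, with u_0..u_{k-1} pairwise distinct and arcs (u_t, u_{t+1 mod k}, s_t)
   in G.  A loop is the case k = 1. *)
Definition is_cycle (V : finType) (G : sdigraph V) (c : seq (V * bool)) : bool :=
  [&& c != [::], uniq (map fst c) &
      all (fun p : (V * bool) * (V * bool) => ((p.1.1, p.2.1), p.1.2) \in G)
          (zip c (rot 1 c))].

(* Sign of a cycle = product of arc signs: positive iff even number of negative arcs. *)
Definition cycle_sign (V : finType) (c : seq (V * bool)) : bool :=
  ~~ odd (count (fun p : V * bool => ~~ p.2) c).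

Definition async (V : finType) (f : BN V) (i : V) (x : config V) : config V :=
  upd x i (f x i).

(* f^{i_1 ... i_l} = f^{i_l} o ... o f^{i_1} *)
Definition async_word (V : finType) (f : BN V) (w : seq V) (x : config V) : config V :=
  foldl (fun y i => async f i y) x w.

Definition synchronizes (V : finType) (f : BN V) (w : seq V) : Prop :=
  exists y : config V, forall x : config V, async_word f w x = y.

Definition contains (V : finType) (u v : seq V) : bool := subseq v u.

From mathcomp Require Import all_boot zify.
Set Implicit Arguments. Unset Strict Implicit. Unset Printing Implicit Defensive.

(* Let x be the unique fixed point, and call S a trap if f maps every configuration that
   agrees with x on S to one that agrees with x on S.  The empty set is a trap, and whenever
   a trap S is not all of V some vertex v outside S is determined: f_v equals x_v on the
   whole subcube where S is fixed to x, so that S + v is again a trap.  Listing the vertices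
   in the order in which they are added gives pi: along any word containing pi, the set on
   which the configuration agrees with x stays a trap and grows at each letter of pi.

   Determined vertices exist because of the cycle signs.  Otherwise, with S fixed to x,
   every vertex outside S has an in-neighbour outside S.  If all cycles are negative,
   following the arcs j -> i of sign [x_j == x_i] closes a cycle, and such a cycle is
   positive.  If all cycles are positive, an initial strongly connected component C of the
   restricted network is balanced, so f preserves two complementary patterns on C; as a
   network with only positive cycles has a fixed point in every subcube, both patterns
   extend to fixed points of f, contradicting uniqueness. *)

Lemma nonuniq_map_split (T U : eqType) (g : T -> U) (s : seq T) :
  ~~ uniq (map g s) -> exists s1 a s2 b s3, s = s1 ++ a :: s2 ++ b :: s3 /\ g a = g b.
Proof.
elim: s => [|x s IH] //=; rewrite negb_and negbK => /orP[/mapP[y sy gxy] | /IH].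
- by case/splitPr: sy => s2 s3; exists [::], x, s2, y, s3.
- by case=> [s1 [a [s2 [b [s3 [-> gab]]]]]]; exists (x :: s1), a, s2, b, s3.
Qed.

Lemma subseq_cons_split (T : eqType) (v : T) (l w : seq T) :
  subseq (v :: l) w -> exists w1 w2, w = w1 ++ v :: w2 /\ subseq l w2.
Proof.
elim: w => [|u w IH] //=; case: eqP => [-> lw | _ /IH[w1 [w2 [-> lw2]]]].
- by exists [::], w.
- by exists (u :: w1), w2.
Qed.

Lemma minimal_ancestor (T : finType) (e : rel T) (P : pred T) (i1 : T) : P i1 ->
  exists2 i0, P i0 & forall i, P i -> connect e i i0 -> connect e i0 i.
Proof.
move=> Pi1; case: (arg_minnP (fun i => #|[set j | connect e j i]|) Pi1) => i0 Pi0 min_i0.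
exists i0 => // i Pi ii0.
have anc_sub : [set j | connect e j i] \subset [set j | connect e j i0].
  by apply/subsetP => j; rewrite !inE => /connect_trans; apply.
have /setP/(_ i0) : [set j | connect e j i] = [set j | connect e j i0].
  by apply/eqP; rewrite eqEcard anc_sub min_i0.
by rewrite !inE connect0.
Qed.

Lemma card_setC_lt (T : finType) (S S' : {set T}) (c : T) :
  S \subset S' -> c \notin S -> c \in S' -> #|~: S'| < #|~: S|.
Proof.
move=> SS' cS cS'; apply: proper_card; apply/properP; split; first by rewrite setCS.
by exists c; rewrite !inE ?cS ?cS'.
Qed.

Lemma is_cycle_sub (V : finType) (G1 G2 : sdigraph V) (c : seq (V * bool)) :
  G1 \subset G2 -> is_cycle G1 c -> is_cycle G2 c.
Proof.
move=> /subsetP sub /and3P[c0 uc arcs]; apply/and3P; split => //.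
by apply: sub_all arcs => q /sub.
Qed.

Section SignedDigraph.

Variables (V : finType) (G : sdigraph V).

Definition adj : rel V := fun j i => [exists s, ((j, i), s) \in G].

(* The double cover: a walk lifted from (u, b) ends at (v, b') iff its sign is b == b'. *)
Definition double_cover : rel (V * bool) := fun x y => ((x.1, y.1), x.2 == y.2) \in G.

Definition cycle_of_lift (x0 : V * bool) (p : seq (V * bool)) : seq (V * bool) :=
  pairmap (fun u v => (u.1, u.2 == v.2)) x0 p.

Lemma map_fst_cycle_of_lift x0 p : map fst (cycle_of_lift x0 p) = map fst (belast x0 p).
Proof. by elim: p x0 => [|y p IH] x0 //=; rewrite IH. Qed.

Lemma cycle_sign_of_lift x0 p : cycle_sign (cycle_of_lift x0 p) = (x0.2 == (last x0 p).2).
Proof.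
rewrite /cycle_sign; elim: p x0 => [|y p IH] x0 /=; first by case: x0.2.
rewrite oddD negb_add -[odd (count _ _)]negbK IH.
by case: x0.2; case: y.2; case: (last y p).2.
Qed.

Lemma cycle_of_lift_arcs x0 p z : path double_cover x0 p -> z.1 = (last x0 p).1 ->
  all (fun q => ((q.1.1, q.2.1), q.1.2) \in G)
      (zip (cycle_of_lift x0 p) (rcons (behead (cycle_of_lift x0 p)) z)).
Proof.
elim: p x0 => [|y p IH] x0 //= /andP[x0y yp] zp.
case: p IH yp zp => [|y' p] IH yp zp /=; first by rewrite zp andbT.
by apply/andP; split; [exact: x0y | exact: IH].
Qed.

Lemma cycle_of_simple_lift x0 p : path double_cover x0 p -> p != [::] ->
  (last x0 p).1 = x0.1 -> uniq (map fst (belast x0 p)) -> is_cycle G (cycle_of_lift x0 p).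
Proof.
rewrite /is_cycle map_fst_cycle_of_lift => x0p + lastp ->.
case: p x0p lastp => [|y p] // x0p lastp _ /=.
by rewrite rot1_cons; apply: cycle_of_lift_arcs x0p _; rewrite lastp.
Qed.

Lemma negative_cycle_of_lift x0 p : path double_cover x0 p -> last x0 p = (x0.1, ~~ x0.2) ->
  exists2 c, is_cycle G c & ~~ cycle_sign c.
Proof.
have [n] := ubnP (size p); elim: n x0 p => // n IH x0 p /ltnSE le_pn x0p.
case: (shortenP x0p) => q x0q uq sub_qp lastq.
have le_qp : size q <= size p by apply: uniq_leq_size sub_qp; case/andP: uq.
have q0 : q != [::] by case: q lastq {x0q uq sub_qp le_qp} => // /(congr1 snd); case: x0.2.
have [uq1 | /nonuniq_map_split[l1 [a [l2 [b [l3 [ql ab]]]]]]] :=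
  boolP (uniq (map fst (belast x0 q))).
  exists (cycle_of_lift x0 q); first by apply: cycle_of_simple_lift; rewrite ?lastq.
  by rewrite cycle_sign_of_lift lastq; case: x0.2.
have x0q_split : x0 :: q = l1 ++ a :: l2 ++ b :: rcons l3 (last x0 q).
  by rewrite lastI ql rcons_cat /= rcons_cat.
have ba : b = (a.1, ~~ a.2).
  move: uq; rewrite x0q_split cat_uniq /= mem_cat inE => /and4P[_ _ /norP[_ /norP[ba _]] _].
  move: ba ab; clear; case: a b => [u s] [w t] /= ba uw; subst w.
  by move: ba; rewrite xpair_eqE eqxx /=; case: s; case: t.
apply: (IH a (rcons l2 b)); last by rewrite last_rcons.
- have := size_belast x0 q; rewrite ql size_cat /= size_cat /= size_rcons.
  by move=> size_q; have := leq_trans le_qp le_pn; rewrite -size_q; lia.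
- move: x0q; rewrite -[path _ _ _]/(sorted double_cover (x0 :: q)) x0q_split.
  by rewrite sorted_cat_cons cat_path rcons_path /= => /and4P[_ -> -> _].
Qed.

Lemma balanced_cycle (h : V -> bool) i j :
  connect [rel u v | ((u, v), h u == h v) \in G] i j -> ((j, i), h j == h i) \in G ->
  exists2 c, is_cycle G c & cycle_sign c.
Proof.
move=> /connectP[p ip ->]; case: (shortenP ip) => q iq uq _ qi.
pose lift v := (v, h v).
have lift_path : path double_cover (lift i) (map lift (rcons q i)).
  by rewrite path_map rcons_path iq.
exists (cycle_of_lift (lift i) (map lift (rcons q i))).
  apply: cycle_of_simple_lift lift_path _ _ _; rewrite ?last_map ?last_rcons //.
  - by rewrite -size_eq0 size_map size_rcons.
  - by rewrite belast_map belast_rcons -map_comp map_id.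
by rewrite cycle_sign_of_lift last_map last_rcons.
Qed.

Lemma lift_connect u v :
  connect adj u v -> forall b, exists b', connect double_cover (u, b) (v, b').
Proof.
move=> /connectP[p + ->]; elim: p u => [|w p IH] u /=; first by move=> _ b; exists b.
case/andP=> /existsP[s uw] /IH wp b; have [b' wb'] := wp (b == s).
exists b'; apply: connect_trans wb'; apply: connect1.
by move: uw; rewrite /double_cover /=; case: b; case: s.
Qed.

Lemma flip_connect x y :
  connect double_cover x y -> connect double_cover (x.1, ~~ x.2) (y.1, ~~ y.2).
Proof.
move=> /connectP[p + ->]; elim: p x => [|z p IH] x /=; first by rewrite connect0.
case/andP=> xz /IH; apply: connect_trans; apply: connect1.
by move: xz; rewrite /double_cover /=; case: x.2; case: z.2.
Qed.

Section PositiveCycles.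

Hypothesis Gpos : forall c, is_cycle G c -> cycle_sign c.

Lemma no_negative_lift v b : ~~ connect double_cover (v, b) (v, ~~ b).
Proof.
apply/negP => /connectP[p vp lastp].
by have [c /Gpos-> //] := negative_cycle_of_lift vp (esym lastp).
Qed.

Variable i0 : V.

Definition lift_sign k := connect double_cover (i0, false) (k, true).

Lemma connect_lift k b : connect adj i0 k -> connect adj k i0 ->
  connect double_cover (i0, false) (k, b) = (b == lift_sign k).
Proof.
move=> i0k ki0.
have not_both c : connect double_cover (i0, false) (k, c) ->
    ~~ connect double_cover (i0, false) (k, ~~ c).
  move=> i0kc; apply/negP => i0kc'.
  have [b2 kb2] := lift_connect ki0 c.
  have i0b2 := connect_trans i0kc kb2.
  have i0nb2 := connect_trans i0kc' (flip_connect kb2).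
  by case: b2 {kb2} i0b2 i0nb2 => [|_] /(negP (no_negative_lift i0 false)).
have [t i0kt] := lift_connect i0k false.
rewrite /lift_sign; move: (not_both t i0kt).
by case: t i0kt => i0kt /= /negbTE nk; case: b; rewrite ?i0kt ?nk.
Qed.

Lemma lift_sign_balanced j i s : ((j, i), s) \in G -> connect adj i0 j -> connect adj i i0 ->
  s = (lift_sign j == lift_sign i).
Proof.
move=> ji i0j ii0.
have adj_ji : adj j i by apply/existsP; exists s.
have ji0 := connect_trans (connect1 adj_ji) ii0.
have i0i := connect_trans i0j (connect1 adj_ji).
have step : double_cover (j, lift_sign j) (i, lift_sign j == s).
  by move: ji; rewrite /double_cover /=; case: (lift_sign j); case: (s).
have := connect_trans (_ : connect double_cover (i0, false) (j, lift_sign j)) (connect1 step).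
rewrite !connect_lift // eqxx => /(_ isT)/eqP <-.
by case: (lift_sign j); case: (s).
Qed.

End PositiveCycles.
End SignedDigraph.

Section BooleanNetwork.

Variables (V : finType) (f : BN V).
Implicit Types (S C : {set V}) (a p x y z : config V).

Lemma updE x j b k : upd x j b k = if k == j then b else x k.
Proof. by rewrite ffunE. Qed.

Lemma upd_id x j : upd x j (x j) = x.
Proof. by apply/ffunP => k; rewrite updE; case: eqP => [->|]. Qed.

Lemma upd_upd x j b c : upd (upd x j b) j c = upd x j c.
Proof. by apply/ffunP => k; rewrite !updE; case: eqP. Qed.

Definition arc_at (w : config V) (j i : V) (s : bool) : bool :=
  [&& w j == false, f w i == ~~ s & f (upd w j true) i == s].

Lemma arc_at_interaction w j i s : arc_at w j i s -> ((j, i), s) \in interaction_graph f.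
Proof. by move=> arc; rewrite inE; apply/existsP; exists w. Qed.

Lemma arc_at_flip y j i : f y i != f (upd y j (~~ y j)) i ->
  arc_at (upd y j false) j i (y j == f y i).
Proof.
move=> flip; have := upd_id y j; rewrite /arc_at updE eqxx upd_upd /=.
case: (y j) flip => /= flip ->; move: flip.
  by case: (f y i); case: (f (upd y j false) i).
by case: (f y i); case: (f (upd y j true) i).
Qed.

Lemma arc_between y z i : f y i != f z i ->
  exists j (w : config V),
    [/\ y j != z j, forall k, w k = y k \/ w k = z k & arc_at w j i (y j == f y i)].
Proof.
(* Walk from y towards z, flipping one differing coordinate at a time. *)
have : forall k, y k != z k -> k \in enum V by move=> k _; rewrite mem_enum.
elim: (enum V) y => [|j s IH] y diff yz.
  case/eqP: yz; congr (f _ i); apply/ffunP => k.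
  by apply/eqP/negPn/negP => /diff; rewrite in_nil.
pose y1 := upd y j (z j).
have [y1y | y1y] := eqVneq (f y1 i) (f y i).
  have diff1 k : y1 k != z k -> k \in s.
    rewrite /y1 updE; case: (k =P j) => [-> | /eqP kj /diff]; first by rewrite eqxx.
    by rewrite inE (negbTE kj).
  have y1z : f y1 i != f z i by rewrite y1y.
  have [j' [w [yz' between arc]]] := IH y1 diff1 y1z.
  have j'j : j' != j by apply: contraNneq yz' => ->; rewrite /y1 updE eqxx.
  rewrite y1y /y1 updE (negbTE j'j) in arc; rewrite /y1 updE (negbTE j'j) in yz'.
  exists j', w; split => // k.
  case: (between k) => ->; last by right.
  by rewrite /y1 updE; case: (k =P j) => [->|]; [right | left].
have yzj : y j != z j by apply: contraNneq y1y => yzj; rewrite /y1 -yzj upd_id.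
have zj : z j = ~~ y j by move: yzj; case: (y j); case: (z j).
exists j, (upd y j false); split => //.
  move=> k; rewrite updE; case: (k =P j) => [-> | _]; last by left.
  by rewrite zj; case: (y j); [right | left].
by apply: arc_at_flip; rewrite -zj eq_sym.
Qed.

Definition agree (S : {set V}) (a y : config V) : bool := [forall k in S, y k == a k].

Lemma agreeP {S a y} : reflect (forall k, k \in S -> y k = a k) (agree S a y).
Proof. by apply: (iffP forall_inP) => yS k /yS/eqP. Qed.

Lemma agree_refl S a : agree S a a.
Proof. exact/agreeP. Qed.

Lemma agree_setU1 S a y v : agree (v |: S) a y = (y v == a v) && agree S a y.
Proof.
apply/agreeP/andP => [yvS | [/eqP yv /agreeP yS] k].
  by split; [apply/eqP/yvS/setU11 | apply/agreeP => k kS; apply: yvS; rewrite inE kS orbT].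
by case/setU1P => [-> | /yS].
Qed.

Definition constant_on (S : {set V}) (a : config V) (i : V) : bool :=
  [forall y, agree S a y ==> (f y i == f a i)].

Lemma constant_onP S a i :
  reflect (forall y, agree S a y -> f y i = f a i) (constant_on S a i).
Proof.
apply: (iffP forallP) => const y; first by move/(implyP (const y))/eqP.
by apply/implyP => /const->.
Qed.

Lemma nonconstant_witness S a i y : ~~ constant_on S a i -> agree S a y ->
  exists2 z, agree S a z & f y i != f z i.
Proof.
case/forallPn => z; rewrite negb_imply => /andP[Sz za] Sy.
have [-> | ya] := eqVneq (f y i) (f a i); first by exists z; rewrite // eq_sym.
by exists a; rewrite ?agree_refl.
Qed.

(* The interaction graph of the subnetwork on ~: S obtained by fixing S to a. *)
Definition local_graph (S : {set V}) (a : config V) : sdigraph V :=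
  [set e : (V * V) * bool | [&& e.1.1 \notin S, e.1.2 \notin S &
     [exists w, agree S a w && arc_at w e.1.1 e.1.2 e.2]]].

Lemma local_graph_sub S a : local_graph S a \subset interaction_graph f.
Proof.
apply/subsetP => [[[j i] s]]; rewrite inE => /and3P[_ _ /existsP[w /andP[_]]].
exact: arc_at_interaction.
Qed.

Lemma local_graph_source S a j i s : ((j, i), s) \in local_graph S a -> j \notin S.
Proof. by rewrite inE => /and3P[]. Qed.

Lemma local_arc S a y z i : agree S a y -> agree S a z -> i \notin S -> f y i != f z i ->
  exists j, ((j, i), y j == f y i) \in local_graph S a.
Proof.
move=> /agreeP Sy /agreeP Sz Si /arc_between[j [w [yzj between arc]]].
have Sj : j \notin S by apply: contra yzj => Sj; rewrite Sy // Sz.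
exists j; rewrite inE /= Sj Si /=; apply/existsP; exists w; rewrite arc andbT.
by apply/agreeP => k Sk; case: (between k) => ->; [exact: Sy | exact: Sz].
Qed.

Definition stable S a C p := forall y, agree S a y -> agree C p y -> agree C p (f y).

Definition fixed_off S y := forall i, i \notin S -> f y i = y i.

Definition patch C p a : config V := [ffun k => if k \in C then p k else a k].

Lemma agree_patch S C p a y : C \subset ~: S ->
  agree (S :|: C) (patch C p a) y -> agree S a y && agree C p y.
Proof.
move=> /subsetP CS /agreeP y_patch; apply/andP; split; apply/agreeP => k kSC.
  rewrite y_patch ?inE ?kSC // ffunE; case: ifP => // /CS.
  by rewrite inE kSC.
by rewrite y_patch ?inE ?kSC ?orbT // ffunE kSC.
Qed.

Lemma fixed_off_patch S C p a y : C \subset ~: S -> stable S a C p ->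
  agree (S :|: C) (patch C p a) y -> fixed_off (S :|: C) y -> fixed_off S y.
Proof.
move=> CS stab /(agree_patch CS)/andP[Sy Cy] fixy i Si.
have [Ci | Ci] := boolP (i \in C); last by apply: fixy; rewrite inE negb_or Si.
by rewrite (agreeP (stab y Sy Cy) i Ci) (agreeP Cy i Ci).
Qed.

Section PositiveCycles.

Hypothesis Gpos : forall c, is_cycle (interaction_graph f) c -> cycle_sign c.

Lemma complementary_stable_patterns S a i1 : i1 \notin S ->
  (forall i, i \notin S -> ~~ constant_on S a i) ->
  exists c C (sg : V -> bool),
    [/\ c \in C, C \subset ~: S & forall t, stable S a C [ffun k => t == sg k]].
Proof.
move=> Si1 nonconst; pose L := local_graph S a.
(* C is the initial strongly connected component of L containing i0. *)
have [i0 Si0 min_i0] := @minimal_ancestor _ (adj L) [pred i | i \notin S] _ Si1.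
pose C := [set i | connect (adj L) i i0].
have CS : C \subset ~: S.
  apply/subsetP => k; rewrite !inE => /connectP[[|k' p] /=]; first by move=> _ <-.
  by case/andP => /existsP[s /local_graph_source].
have Cpred j i : adj L j i -> i \in C -> j \in C.
  by move=> ji; rewrite !inE; apply: connect_trans (connect1 ji).
have Lpos c : is_cycle L c -> cycle_sign c.
  by move=> /(is_cycle_sub (local_graph_sub S a)) /Gpos.
pose sg := lift_sign L i0.
have balanced j i s : ((j, i), s) \in L -> i \in C -> s = (sg j == sg i).
  move=> ji Ci; have Cj : j \in C by apply: Cpred Ci; apply/existsP; exists s.
  apply: (lift_sign_balanced (i0 := i0) Lpos ji); last by rewrite inE in Ci.
  by apply: min_i0; [rewrite /= -in_setC (subsetP CS) | rewrite inE in Cj].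
exists i0, C, sg; split => // [|t y Sy Cy]; first by rewrite inE connect0.
apply/agreeP => i Ci; rewrite ffunE; apply/eqP; apply: contraT => yi.
have Si : i \notin S by rewrite -in_setC (subsetP CS).
have [z Sz yz] := nonconstant_witness (nonconst i Si) Sy.
have [j Lji] := local_arc Sy Sz Si yz.
have Cj : j \in C by apply: Cpred Ci; apply/existsP; eexists; exact: Lji.
move: (balanced _ _ _ Lji Ci) yi; rewrite (agreeP Cy j Cj) ffunE.
by case: (t); case: (sg i); case: (sg j); case: (f y i).
Qed.

Lemma stable_pattern_exists S a i1 : i1 \notin S ->
  exists c C p, [/\ c \in C, C \subset ~: S & stable S a C p].
Proof.
move=> Si1; have [/exists_inP[v Sv /constant_onP const] | ] :=
  boolP [exists (v | v \notin S), constant_on S a v].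
  exists v, [set v], (f a); split; rewrite ?set11 ?sub1set ?inE //.
  by move=> y Sy _; apply/agreeP => k /set1P->; apply: const.
rewrite negb_exists_in => /forall_inP nonconst.
have [c [C [sg [Cc CS stab]]]] := complementary_stable_patterns Si1 nonconst.
by exists c, C, [ffun k => true == sg k].
Qed.

Lemma subcube_fixpoint S a : exists2 y, agree S a y & fixed_off S y.
Proof.
have [n] := ubnP #|~: S|; elim: n S a => // n IH S a /ltnSE leSn.
have [i1 Si1 | full] := pickP [pred i | i \notin S]; last first.
  by exists a => [|i]; rewrite ?agree_refl // (negbFE (full i)).
have [c [C [p [Cc CS stab]]]] := stable_pattern_exists a Si1.
have ltSC : #|~: (S :|: C)| < n.
  apply: leq_trans leSn; apply: (card_setC_lt (c := c)); rewrite ?subsetUl //.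
    by rewrite -in_setC (subsetP CS).
  by rewrite inE Cc orbT.
have [y SCy fixy] := IH (S :|: C) (patch C p a) ltSC.
exists y; last exact: fixed_off_patch SCy fixy.
by case/andP: (agree_patch CS SCy).
Qed.

End PositiveCycles.

Section FixedPoint.

Variable x : config V.
Hypothesis fx : f x = x.

Definition trap S := forall y, agree S x y -> agree S x (f y).

Lemma async_agree S i y : trap S -> agree S x y -> agree S x (async f i y).
Proof.
move=> trapS Sy; apply/agreeP => k Sk; rewrite /async updE.
by case: (k =P i) => [<- | _]; [apply: (agreeP (trapS y Sy)) | apply: (agreeP Sy)].
Qed.

Lemma async_word_agree S w y : trap S -> agree S x y -> agree S x (async_word f w y).
Proof. by move=> trapS; elim: w y => [|i w IH] y Sy //=; apply/IH/async_agree. Qed.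

Lemma determined_value S v y : constant_on S x v -> agree S x y -> f y v = x v.
Proof. by move=> /constant_onP const /const->; rewrite fx. Qed.

Lemma trap_setU1 S v : trap S -> constant_on S x v -> trap (v |: S).
Proof.
move=> trapS detv y; rewrite !agree_setU1 => /andP[_ Sy].
by rewrite (determined_value detv Sy) eqxx trapS.
Qed.

Lemma async_determined S v y : trap S -> constant_on S x v -> agree S x y ->
  agree (v |: S) x (async f v y).
Proof.
move=> trapS detv Sy; rewrite agree_setU1 async_agree // andbT.
by rewrite updE eqxx (determined_value detv Sy).
Qed.

Lemma trap_fixpoint S y : trap S -> agree S x y -> fixed_off S y -> f y = y.
Proof.
move=> trapS Sy fixy; apply/ffunP => i; have [Si | /fixy //] := boolP (i \in S).
by rewrite (agreeP (trapS y Sy) i Si) (agreeP Sy i Si).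
Qed.

Lemma determined_of_negative S i1 :
  (forall c, is_cycle (interaction_graph f) c -> ~~ cycle_sign c) -> i1 \notin S ->
  exists2 v, v \notin S & constant_on S x v.
Proof.
move=> Gneg Si1; apply/exists_inP; apply: contraT.
rewrite negb_exists_in => /forall_inP nonconst.
pose e := [rel j i | ((j, i), x j == x i) \in interaction_graph f].
have has_pred i : i \notin S -> exists2 j, j \notin S & e j i.
  move=> Si; have [z Sz xz] := nonconstant_witness (nonconst i Si) (agree_refl S x).
  have [j Lji] := local_arc (agree_refl S x) Sz Si xz; rewrite fx in Lji.
  exists j; first exact: local_graph_source Lji.
  exact: (subsetP (local_graph_sub S x)).
have [i0 Si0 min_i0] := @minimal_ancestor _ e [pred i | i \notin S] _ Si1.
have [j Sj ji0] := has_pred i0 Si0.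
have [c cycle_c pos_c] := balanced_cycle (min_i0 j Sj (connect1 ji0)) ji0.
by move: (Gneg c cycle_c); rewrite pos_c.
Qed.

Lemma determined_of_positive S i1 :
  (forall c, is_cycle (interaction_graph f) c -> cycle_sign c) ->
  (forall y, f y = y -> y = x) -> trap S -> i1 \notin S ->
  exists2 v, v \notin S & constant_on S x v.
Proof.
move=> Gpos x_unique trapS Si1; apply/exists_inP; apply: contraT.
rewrite negb_exists_in => /forall_inP nonconst.
have [c [C [sg [Cc CS stab]]]] := complementary_stable_patterns Gpos Si1 nonconst.
have pattern_at_c t : x c = (t == sg c).
  pose p := [ffun k => t == sg k].
  have [y SCy fixy] := subcube_fixpoint Gpos (S :|: C) (patch C p x).
  have /andP[Sy Cy] := agree_patch CS SCy.
  have <- : y = x by apply/x_unique/(trap_fixpoint trapS Sy)/(fixed_off_patch CS (stab t)).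
  by rewrite (agreeP Cy c Cc) ffunE.
by move: (pattern_at_c true); rewrite (pattern_at_c false); case: (sg c).
Qed.

Hypothesis determined : forall S, trap S -> forall i, i \notin S ->
  exists2 v, v \notin S & constant_on S x v.

Lemma synchronizing_order S : trap S -> exists l, [/\ uniq l, l =i ~: S &
  forall w y, subseq l w -> agree S x y -> async_word f w y = x].
Proof.
have [n] := ubnP #|~: S|; elim: n S => // n IH S /ltnSE leSn trapS.
have [i1 Si1 | full] := pickP [pred i | i \notin S]; last first.
  exists [::]; split => // [k | w y _ Sy]; first by rewrite inE in_nil (negbFE (full k)).
  apply/ffunP => k; apply: (agreeP (async_word_agree w trapS Sy)).
  exact: negbFE (full k).
have [v Sv detv] := determined trapS Si1.
have ltSv : #|~: (v |: S)| < n.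
  by apply: leq_trans leSn; apply: (card_setC_lt (c := v)); rewrite ?subsetUr ?setU11.
have [l [ul lS syncl]] := IH (v |: S) ltSv (trap_setU1 trapS detv).
exists (v :: l); split.
- by rewrite /= ul andbT lS !inE eqxx.
- by move=> k; rewrite inE lS !inE negb_or; case: (k =P v) => // ->.
- move=> w y /subseq_cons_split[w1 [w2 [-> lw2]]] Sy.
  rewrite /async_word foldl_cat /=; apply: syncl lw2 _.
  exact/async_determined/async_word_agree.
Qed.

End FixedPoint.

End BooleanNetwork.

Theorem proposition7 (V : finType) (G : sdigraph V) (f : BN V) :
  (exists s : bool, forall c : seq (V * bool), is_cycle G c -> cycle_sign c = s) ->
  interaction_graph f = G ->
  (exists! x : config V, f x = x) ->
  exists pi : seq V,
    perm_eq pi (enum V) /\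
    (forall w : seq V, contains w pi -> synchronizes f w) /\
    synchronizes f pi.
Proof.
move=> [s Gs] fG [x [fx x_unique]]; subst G.
have determined S : trap f x S -> forall i, i \notin S ->
    exists2 v, v \notin S & constant_on f S x v.
  move=> trapS i Si; case: s Gs => Gs.
    by apply: determined_of_positive Gs _ trapS Si => y /x_unique.
  by apply: (determined_of_negative fx) Si => c /Gs->.
have trap0 : trap f x set0 by move=> y _; apply/agreeP => k; rewrite inE.
have [l [ul l_all syncl]] := synchronizing_order fx determined trap0.
have sync_l w : contains w l -> synchronizes f w.
  by move=> lw; exists x => y; apply: syncl lw _; apply/agreeP => k; rewrite inE.
exists l; split; last by split => //; apply/sync_l/subseq_refl.
by apply: uniq_perm ul (enum_uniq _) _ => k; rewrite l_all mem_enum !inE.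
Qed.
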